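(* Let $\gamma_{ab}$ and $h_{ab}$ be real symmetric invertible $2\times2$ matrices (the induced metric and the worldsheet metric at a point), with matrix forms $\Gamma$ and $H$, and let $a_1=\operatorname{tr}(\Gamma H^{-1})=\gamma_{ab}h^{ba}$, $a_2=\operatorname{tr}((\Gamma H^{-1})^2)=\gamma_{ab}h^{bc}\gamma_{cd}h^{da}$, where $h^{ab}$ is the inverse of $h_{ab}$. Let $\mathcal{L}=f(\sqrt{\gamma},a_1,a_2)$ with $f$ continuously differentiable, regarded as a function of $h^{ij}$ (with $\gamma_{ab}$ fixed). If $\partial\mathcal{L}/\partial h^{ij}=0$ for all $i,j$ and $\partial f/\partial a_1\neq0$ there, then $\partial f/\partial a_2\neq0$ and $$h_{ab}=\phi\,\gamma_{ab},\qquad \phi=-2\,\frac{\partial f/\partial a_2}{\partial f/\partial a_1}\Bigg|_{a_1=2\phi^{-1},\ a_2=2\phi^{-2}},$$ and in particular $a_1=2\phi^{-1}$, $a_2=2\phi^{-2}$.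
   Context: $\gamma$ denotes the absolute value of $\det\gamma_{ab}$; $\sqrt\gamma$ does not depend on $h$. The derivative $\partial\mathcal{L}/\partial h^{ij}$ is computed by the chain rule using $\partial a_1/\partial h^{ij}=\gamma_{ji}$ and $\partial a_2/\partial h^{ij}=2\gamma_{ja}h^{ab}\gamma_{bi}$. *)

From HB Require Import structures.
From mathcomp Require Import all_boot all_order all_algebra.
From mathcomp Require Import all_classical all_reals all_analysis.
Set Implicit Arguments. Unset Strict Implicit. Unset Printing Implicit Defensive.
Import Order.TTheory GRing.Theory Num.Theory.
Import numFieldNormedType.Exports.
Local Open Scope ring_scope.

(* Gam = gamma_{ab} (induced metric), X = h^{ab} (inverse worldsheet metric) *)
Definition a1_of {R : realType} (Gam X : 'M[R]_2) : R := \tr (Gam *m X).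
Definition a2_of {R : realType} (Gam X : 'M[R]_2) : R :=
  \tr ((Gam *m X) *m (Gam *m X)).
Definition sqrtgam {R : realType} (Gam : 'M[R]_2) : R := Num.sqrt `|\det Gam|.

Definition fargs {R : realType} (Gam X : 'M[R]_2) : 'rV[R]_3 :=
  \row_(k < 3) nth 0 [:: sqrtgam Gam; a1_of Gam X; a2_of Gam X] k.

Definition Lag {R : realType} (f : 'rV[R]_3 -> R) (Gam : 'M[R]_2) :
  'M[R]_2 -> R := fun X => f (fargs Gam X).

(* partial derivative of f with respect to its k-th argument (k = 0,1,2
   for sqrt gamma, a1, a2) *)
Definition pder {R : realType} (f : 'rV[R]_3 -> R) (k : 'I_3) (p : 'rV[R]_3) : R :=
  'D_(delta_mx 0 k) f p.

(* Stationarity in h^{ab} reads, entrywise, f1 gamma + 2 f2 gamma h^{-1} gamma = 0, because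
   d a1 = tr(gamma dX) and d a2 = 2 tr(gamma X gamma dX) for X = h^{-1}.  As gamma is
   invertible and f1 is nonzero, f2 cannot vanish and gamma h^{-1} is the scalar matrix
   -f1/(2 f2) = phi^{-1}; hence h = phi gamma, a1 = 2/phi and a2 = 2/phi^2. *)
From HB Require Import structures.
From mathcomp Require Import all_boot all_order all_algebra.
From mathcomp Require Import all_classical all_reals all_analysis.
Import Order.TTheory GRing.Theory Num.Theory.
Import numFieldNormedType.Exports.
Local Open Scope ring_scope.

Section TraceDerivatives.
Variables (R : realFieldType) (n : nat).
Implicit Types A X v : 'M[R]_n.

Lemma derive_coord X v i j : 'D_v (fun Y : 'M[R]_n => Y i j) X = v i j.
Proof.
have := derive_mx (@derivable_id R _ X v).
by rewrite derive_id => /matrixP /(_ i j); rewrite mxE.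
Qed.

Lemma mulmx_coordE A i j :
  (fun X : 'M[R]_n => (A *m X) i j) = \sum_k (fun X : 'M[R]_n => A i k * X k j).
Proof. by rewrite fct_sumE; apply/funext => X; rewrite mxE. Qed.

Lemma differentiable_mulmx_coord A i j X :
  differentiable (fun Y : 'M[R]_n => (A *m Y) i j) X.
Proof.
rewrite mulmx_coordE; apply: differentiable_sum => k.
exact: differentiableM (differentiable_cst _ _) (differentiable_coord _ _ _).
Qed.

Lemma derive_mulmx_coord A i j X v :
  'D_v (fun Y : 'M[R]_n => (A *m Y) i j) X = (A *m v) i j.
Proof.
have dY k : derivable (fun Y : 'M[R]_n => Y k j) X v.
  exact/diff_derivable/differentiable_coord.
rewrite mulmx_coordE derive_sum => [|k]; last exact: derivableM.
rewrite mxE; apply: eq_bigr => k _.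
by rewrite deriveM // derive_coord derive_cst scaler0 addr0.
Qed.

Lemma trace_mulmxE A :
  (fun Y => \tr (A *m Y)) = \sum_i (fun Y : 'M[R]_n => (A *m Y) i i).
Proof. by rewrite fct_sumE; apply/funext. Qed.

Lemma differentiable_trace_mulmx A X :
  differentiable (fun Y => \tr (A *m Y)) X.
Proof.
rewrite trace_mulmxE; apply: differentiable_sum => i.
exact: differentiable_mulmx_coord.
Qed.

Lemma derive_trace_mulmx A X v :
  'D_v (fun Y => \tr (A *m Y)) X = \tr (A *m v).
Proof.
rewrite trace_mulmxE derive_sum => [|i]; last first.
  exact/diff_derivable/differentiable_mulmx_coord.
by apply: eq_bigr => i _; rewrite derive_mulmx_coord.
Qed.

Lemma trace_sqr_mulmxE A :
  (fun Y => \tr ((A *m Y) *m (A *m Y))) =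
  \sum_i \sum_k ((fun Y : 'M[R]_n => (A *m Y) i k) *
                 (fun Y : 'M[R]_n => (A *m Y) k i)).
Proof.
rewrite fct_sumE; apply/funext => X; apply: eq_bigr => i _.
by rewrite fct_sumE mxE.
Qed.

Lemma differentiable_trace_sqr_mulmx A X :
  differentiable (fun Y => \tr ((A *m Y) *m (A *m Y))) X.
Proof.
rewrite trace_sqr_mulmxE; apply: differentiable_sum => i.
apply: differentiable_sum => k.
exact: differentiableM (differentiable_mulmx_coord _ _ _ _)
                       (differentiable_mulmx_coord _ _ _ _).
Qed.

Lemma derive_trace_sqr_mulmx A X v :
  'D_v (fun Y => \tr ((A *m Y) *m (A *m Y))) X = 2 * \tr ((A *m X) *m (A *m v)).
Proof.
have dAY i k : derivable (fun Y : 'M[R]_n => (A *m Y) i k) X v.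
  exact/diff_derivable/differentiable_mulmx_coord.
rewrite trace_sqr_mulmxE derive_sum => [|i]; last first.
  by apply/diff_derivable/differentiable_sum => k; apply: differentiableM;
    apply: differentiable_mulmx_coord.
under eq_bigr => i _.
  rewrite derive_sum => [|k]; last exact: derivableM.
  under eq_bigr => k _ do rewrite deriveM // !derive_mulmx_coord.
  over.
rewrite mulr_natl mulr2n {2}mxtrace_mulC /mxtrace -big_split /=.
apply: eq_bigr => i _; rewrite !mxE -big_split /=.
by apply: eq_bigr => k _; rewrite [_ *: (A *m v) i k]mulrC.
Qed.

End TraceDerivatives.

Lemma mxtrace_mul_delta {R : pzSemiRingType} {n : nat} (A : 'M[R]_n) i j :
  \tr (A *m delta_mx i j) = A j i.
Proof.
rewrite /mxtrace (bigD1 j) //= big1 => [|k /negbTE kj]; rewrite mxE.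
  rewrite (bigD1 i) //= big1 => [|l /negbTE li]; rewrite mxE ?li ?mulr0 //.
  by rewrite !eqxx mulr1 addr0 addr0.
by rewrite big1 // => l _; rewrite mxE kj andbF mulr0.
Qed.

Lemma stationary_scalar_mx {F : fieldType} {n : nat} (A X : 'M[F]_n.+1) (a b : F) :
  A \in unitmx -> a != 0 -> a *: A + b *: (A *m X *m A) = 0 ->
  b != 0 /\ A *m X = (- a / b)%:M.
Proof.
move=> uA a0 stat.
have b0 : b != 0.
  apply: contraTneq uA => b0; move: stat; rewrite b0 scale0r addr0 => /eqP.
  by rewrite scaler_eq0 (negbTE a0) => /eqP ->; rewrite unitmxE det0 unitr0.
split=> //.
have AXA : A *m X *m A = (- a / b) *: A.
  apply: (scalerI b0); rewrite scalerA mulrCA mulfV // mulr1 scaleNr.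
  by apply/eqP; rewrite -addr_eq0 addrC stat.
by rewrite -(mulmxK uA (A *m X)) AXA -scalemxAl mulmxV // scalemx1.
Qed.

Lemma scalar_mulmx_invmx {F : fieldType} {n : nat} (A H : 'M[F]_n) (c : F) :
  H \in unitmx -> c != 0 -> A *m invmx H = c%:M -> H = c^-1 *: A.
Proof.
move=> uH c0 AH.
by rewrite -(mulmxKV uH A) AH mul_scalar_mx scalerA mulVf // scale1r.
Qed.

Section Lagrangian.
Context {R : realType} {f : 'rV[R]_3 -> R} {Gam : 'M[R]_2}.
Hypothesis df : forall p, differentiable f p.
Implicit Types X v : 'M[R]_2.

Local Notation e k := (delta_mx 0 (inord k) : 'rV[R]_3).

Lemma fargsE :
  fargs Gam = cst (sqrtgam Gam *: e 0)
    + (fun X => a1_of Gam X *: e 1) + (fun X => a2_of Gam X *: e 2).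
Proof.
apply/funext => X; apply/rowP => k; rewrite !mxE.
by case: k => [[|[|[|//]]] ?]; rewrite -!val_eqE /= !inordK //= ?mulr1 ?mulr0
  ?addr0 ?add0r.
Qed.

Lemma differentiable_fargs X : differentiable (fargs Gam) X.
Proof.
rewrite fargsE; apply: differentiableD; [apply: differentiableD|].
- exact: differentiable_cst.
- exact/differentiableZl/differentiable_trace_mulmx.
- exact/differentiableZl/differentiable_trace_sqr_mulmx.
Qed.

Lemma derive_fargs X v :
  'D_v (fargs Gam) X =
    \tr (Gam *m v) *: e 1 + (2 * \tr ((Gam *m X) *m (Gam *m v))) *: e 2.
Proof.
rewrite derive_mx; last exact/diff_derivable/differentiable_fargs.
apply/rowP => k; rewrite !mxE.
case: k => [[|[|[|//]]] ?]; rewrite -!val_eqE /= !inordK //= ?mulr1 ?mulr0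
  ?addr0 ?add0r.
- under eq_fun do rewrite mxE; exact: derive_cst.
- under eq_fun do rewrite mxE; exact: derive_trace_mulmx.
- under eq_fun do rewrite mxE; exact: derive_trace_sqr_mulmx.
Qed.

Lemma derive_Lag X v :
  'D_v (Lag f Gam) X = pder f (inord 1) (fargs Gam X) * \tr (Gam *m v)
    + pder f (inord 2) (fargs Gam X) * (2 * \tr ((Gam *m X) *m (Gam *m v))).
Proof.
have dfargs := differentiable_fargs X.
rewrite deriveE; last exact: differentiable_comp.
rewrite diff_comp // /comp -(deriveE v dfargs) derive_fargs linearD !linearZ.
by rewrite /pder -!deriveE //; congr (_ + _); exact: mulrC.
Qed.

Lemma stationary_Lag_mx X :
  (forall i j, 'D_(delta_mx i j) (Lag f Gam) X = 0) ->
  pder f (inord 1) (fargs Gam X) *: Gam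
    + (2 * pder f (inord 2) (fargs Gam X)) *: (Gam *m X *m Gam) = 0.
Proof.
move=> stat; apply/matrixP => a b; have := stat b a.
by rewrite derive_Lag mulmxA !mxtrace_mul_delta !mxE mulrCA mulrA.
Qed.

End Lagrangian.

Theorem mainTheorem6 (R : realType) (f : 'rV[R]_3 -> R) (Gam H : 'M[R]_2) :
  (forall p, differentiable f p) ->
  (forall k : 'I_3, continuous (pder f k)) ->
  Gam^T = Gam -> Gam \in unitmx ->
  H^T = H -> H \in unitmx ->
  (forall i j : 'I_2, 'D_(delta_mx i j) (Lag f Gam) (invmx H) = 0) ->
  pder f (inord 1) (fargs Gam (invmx H)) != 0 ->
  let f1 := pder f (inord 1) (fargs Gam (invmx H)) in
  let f2 := pder f (inord 2) (fargs Gam (invmx H)) in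
  let phi := - 2 * f2 / f1 in
  [/\ f2 != 0,
      H = phi *: Gam,
      a1_of Gam (invmx H) = 2 * phi^-1
    & a2_of Gam (invmx H) = 2 * phi^-2].
Proof.
move=> df _ _ uGam _ uH stat f1n0 f1 f2 phi.
have [nz2f2 GamX] := stationary_scalar_mx Gam (invmx H) f1 (2 * f2) uGam f1n0
  (stationary_Lag_mx df (invmx H) stat).
have f2n0 : f2 != 0 by apply: contraNneq nz2f2 => ->; rewrite mulr0.
set c := - f1 / (2 * f2) in GamX.
have phiE : phi = c^-1 by rewrite invf_div invrN mulrN /phi !mulNr.
have c0 : c != 0 by rewrite mulf_neq0 ?oppr_eq0 ?invr_eq0.
split=> //.
- by rewrite phiE (scalar_mulmx_invmx Gam H c uH c0 GamX).
- by rewrite /a1_of GamX mxtrace_scalar phiE invrK mulr_natl.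
- by rewrite /a2_of GamX -scalar_mxM mxtrace_scalar phiE exprVn invrK expr2
    mulr_natl.
Qed.
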